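(* Let $v\in C(S^1,(0,\infty))$ be separable in $S^1$ with $\max_{S^1}v>\min_{S^1}v$. Let $\alpha_0\in[0,2\pi)$ be such that the set of maximum points of $v$ equals $\{(\cos(\alpha_0+\theta),\sin(\alpha_0+\theta)):|\theta|\le\theta_1\}$ for some $\theta_1\in[0,\pi)$ (such $\alpha_0$ exists, and is the angle of the center of the arc of maximum points). Then for every $\alpha\in\mathbb{R}$: if $(\cos\alpha_0,\sin\alpha_0)\in S^1_\alpha$, then $v(x)\ge v(l_\alpha(x))$ for all $x\in S^1_\alpha$; and if $(\cos\alpha_0,\sin\alpha_0)\in S^1\setminus S^1_\alpha$, then $v(x)\le v(l_\alpha(x))$ for all $x\in S^1_\alpha$.
   Context: $S^1\subset\mathbb{R}^2$ is the unit circle. For $\alpha\in\mathbb{R}$, $S^1_\alpha=\{(\cos(\alpha+\theta),\sin(\alpha+\theta)):\theta\in(0,\pi)\}$, and for $x\in S^1$, $l_\alpha(x)$ denotes the reflection of $x$ across the line through the origin with direction $(\cos\alpha,\sin\alpha)$. A function $v\in C(S^1,\mathbb{R})$ is called separable in $S^1$ if for every $\alpha\in[0,2\pi)$, either $v(l_\alpha(x))\ge v(x)$ for all $x\in S^1_\alpha$, or $v(l_\alpha(x))\le v(x)$ for all $x\in S^1_\alpha$. *)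

From Stdlib Require Import Reals.
Open Scope R_scope.

Definition pt : Type := (R * R)%type.

Definition S1 (p : pt) : Prop := fst p ^ 2 + snd p ^ 2 = 1.

Definition ang (t : R) : pt := (cos t, sin t).

Definition S1_half (alpha : R) (p : pt) : Prop :=
  exists theta, 0 < theta < PI /\ p = ang (alpha + theta).

(* Reflection across the line through 0 with direction u = (cos alpha, sin alpha):
   l_alpha(x) = 2 <x,u> u - x. *)
Definition refl (alpha : R) (p : pt) : pt :=
  let d := fst p * cos alpha + snd p * sin alpha in
  (2 * d * cos alpha - fst p, 2 * d * sin alpha - snd p).

Definition dist2 (p q : pt) : R :=
  sqrt ((fst p - fst q) ^ 2 + (snd p - snd q) ^ 2).

Definition continuous_on_S1 (v : pt -> R) : Prop :=
  forall p, S1 p -> forall eps, 0 < eps ->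
    exists delta, 0 < delta /\
      forall q, S1 q -> dist2 q p < delta -> Rabs (v q - v p) < eps.

Definition separable_S1 (v : pt -> R) : Prop :=
  forall alpha, 0 <= alpha < 2 * PI ->
    (forall x, S1_half alpha x -> v (refl alpha x) >= v x) \/
    (forall x, S1_half alpha x -> v (refl alpha x) <= v x).

Definition is_max_point (v : pt -> R) (p : pt) : Prop :=
  S1 p /\ forall q, S1 q -> v q <= v p.

From Stdlib Require Import Reals Lra Lia Nsatz ZArith.
Open Scope R_scope.

(* Proof of Corollary 2.1.  Write c = ang alpha0 for the centre of the arc of
   maximum points and parametrize S^1_alpha as ang (alpha + t), 0 < t < PI;
   the reflection l_alpha sends ang (alpha + t) to ang (alpha - t).
   - If c lies in S^1_alpha, the arc of maximum points (of length < 2 PI and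
     centred at c) contains a point ang (alpha + t) of S^1_alpha whose mirror
     image ang (alpha - t) is not a maximum point.  There v drops strictly
     under reflection, so separability forces v (l_alpha x) <= v x on all of
     S^1_alpha.
   - If c lies in the open half-circle opposite to S^1_alpha, the first case
     applied to the angle alpha + PI gives the reverse inequality.
   - If c lies on the axis of reflection, rotating alpha slightly puts c in
     the opposite half-circle, and the inequality passes to the limit by
     continuity of v. *)

Lemma ang_eq_cos_sin a b : ang a = ang b -> cos a = cos b /\ sin a = sin b.
Proof. unfold ang; intros H; inversion H; auto. Qed.

Lemma ang_shift a b s : ang a = ang b -> ang (a + s) = ang (b + s).
Proof.
  intros H; apply ang_eq_cos_sin in H; destruct H as [Hc Hs]; unfold ang.
  rewrite !cos_plus, !sin_plus, Hc, Hs; reflexivity.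
Qed.

Lemma S1_ang a : S1 (ang a).
Proof. unfold S1, ang; simpl. pose proof (sin2_cos2 a). unfold Rsqr in *. lra. Qed.

Lemma refl_ang alpha t : refl alpha (ang (alpha + t)) = ang (alpha - t).
Proof.
  unfold refl, ang; simpl. rewrite cos_plus, sin_plus, cos_minus, sin_minus.
  pose proof (sin2_cos2 alpha) as H. unfold Rsqr in H.
  f_equal; nsatz.
Qed.

Lemma ang_2PI a : ang (a + 2 * PI) = ang a.
Proof. unfold ang; rewrite cos_plus, sin_plus, cos_2PI, sin_2PI; f_equal; ring. Qed.

Lemma ang_reduce a : exists a', 0 <= a' < 2 * PI /\ ang a' = ang a.
Proof.
  pose proof PI_RGT_0.
  set (k := Zfloor (a / (2 * PI))).
  destruct (Zfloor_bound (a / (2 * PI))) as [Hlo Hhi]; fold k in Hlo, Hhi.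
  assert (Hrange : 0 <= a - 2 * IZR k * PI < 2 * PI).
  { apply Rmult_le_compat_r with (r := 2 * PI) in Hlo; [|lra].
    apply Rmult_lt_compat_r with (r := 2 * PI) in Hhi; [|lra].
    unfold Rdiv in Hlo, Hhi. rewrite Rmult_assoc, Rinv_l in Hlo, Hhi by lra. lra. }
  exists (a - 2 * IZR k * PI); split; [exact Hrange|].
  unfold ang. destruct (Z_le_gt_dec 0 k) as [Hk|Hk].
  - rewrite <- (Z2Nat.id k Hk), <- INR_IZR_INZ.
    rewrite <- (cos_period _ (Z.to_nat k)), <- (sin_period _ (Z.to_nat k)).
    f_equal; f_equal; ring.
  - rewrite <- (cos_period a (Z.to_nat (- k))), <- (sin_period a (Z.to_nat (- k))).
    rewrite INR_IZR_INZ, Z2Nat.id, opp_IZR by lia.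
    f_equal; f_equal; ring.
Qed.

Lemma ang_neq a u : 0 < u < 2 * PI -> ang a <> ang (a + u).
Proof.
  intros Hu H. apply ang_eq_cos_sin in H. destruct H as [Hc Hs].
  assert (Hcos1 : cos u = 1).
  { replace u with ((a + u) - a) by ring. rewrite cos_minus, <- Hc, <- Hs.
    pose proof (sin2_cos2 a). unfold Rsqr in *. lra. }
  assert (Hsin : 0 < sin (u / 2)) by (apply sin_gt_0; lra).
  replace u with (2 * (u / 2)) in Hcos1 by field.
  rewrite cos_2a_sin in Hcos1. nra.
Qed.

Lemma Rabs_sin_le x : Rabs (sin x) <= Rabs x.
Proof.
  assert (Hpos : forall y, 0 < y -> - y < sin y < y).
  { intros y Hy. split; [|apply sin_lt_x; lra].
    destruct (Rlt_dec y PI) as [HyPI|HyPI].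
    - pose proof (sin_gt_0 y Hy HyPI). lra.
    - pose proof (SIN_bound y). pose proof PI2_3_2. lra. }
  apply Rabs_le. destruct (Rtotal_order x 0) as [Hx|[Hx|Hx]].
  - pose proof (Hpos (- x) ltac:(lra)) as Hb. rewrite sin_neg in Hb.
    rewrite Rabs_left by lra. lra.
  - subst; rewrite sin_0, Rabs_R0; lra.
  - pose proof (Hpos x Hx). rewrite Rabs_right by lra. lra.
Qed.

Lemma dist_ang a b : dist2 (ang a) (ang b) <= Rabs (a - b).
Proof.
  unfold dist2, ang; cbn [fst snd].
  assert (Hchord : (cos a - cos b) ^ 2 + (sin a - sin b) ^ 2
                   = 4 * (sin ((a - b) / 2)) ^ 2).
  { assert (Hhalf : cos (a - b) = 1 - 2 * sin ((a - b) / 2) * sin ((a - b) / 2)).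
    { rewrite <- cos_2a_sin. f_equal; field. }
    rewrite cos_minus in Hhalf. pose proof (sin2_cos2 a). pose proof (sin2_cos2 b).
    unfold Rsqr in *. nra. }
  rewrite Hchord, <- (sqrt_Rsqr_abs (a - b)).
  apply sqrt_le_1_alt.
  pose proof (Rsqr_le_abs_1 _ _ (Rabs_sin_le ((a - b) / 2))).
  unfold Rsqr in *. nra.
Qed.

(* The separability dichotomy, stated for alpha in [0, 2 PI), holds for every
   real alpha, since S^1_alpha and l_alpha only depend on ang alpha. *)
Lemma separable_all_angles v : separable_S1 v -> forall alpha,
    (forall x, S1_half alpha x -> v (refl alpha x) >= v x) \/
    (forall x, S1_half alpha x -> v (refl alpha x) <= v x).
Proof.
  intros Hs alpha. destruct (ang_reduce alpha) as [a' [Ha' E]].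
  assert (Hrefl : forall x, refl a' x = refl alpha x).
  { intros x. apply ang_eq_cos_sin in E. destruct E as [Hc Hs'].
    unfold refl; rewrite Hc, Hs'; reflexivity. }
  assert (Hhalf : forall x, S1_half alpha x -> S1_half a' x).
  { intros x [t [Ht ->]]. exists t; split; [exact Ht|].
    symmetry; apply ang_shift, E. }
  destruct (Hs a' Ha') as [H|H]; [left|right]; intros x Hx;
    rewrite <- Hrefl; apply H, Hhalf, Hx.
Qed.

Lemma separable_strict_drop v alpha x0 :
  separable_S1 v -> S1_half alpha x0 -> v (refl alpha x0) < v x0 ->
  forall x, S1_half alpha x -> v (refl alpha x) <= v x.
Proof.
  intros Hs Hx0 Hdrop.
  destruct (separable_all_angles v Hs alpha) as [H|H]; [|exact H].
  specialize (H x0 Hx0). lra.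
Qed.

Lemma continuous_v_ang v : continuous_on_S1 v -> forall b eps, 0 < eps ->
  exists delta, 0 < delta /\
    forall s, Rabs (s - b) < delta -> Rabs (v (ang s) - v (ang b)) < eps.
Proof.
  intros Hc b eps Heps.
  destruct (Hc (ang b) (S1_ang b) eps Heps) as [delta [Hdelta Hnear]].
  exists delta; split; [exact Hdelta|].
  intros s Hs. apply Hnear; [apply S1_ang|].
  eapply Rle_lt_trans; [apply dist_ang | exact Hs].
Qed.

Lemma ge_at_limit v a b c e0 :
  continuous_on_S1 v -> 0 < e0 ->
  (forall e, 0 < e < e0 -> a <= v (ang (b + c * e))) -> a <= v (ang b).
Proof.
  intros Hc He0 Hbound.
  destruct (Rle_lt_dec a (v (ang b))) as [Hle|Hlt]; [exact Hle|exfalso].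
  destruct (continuous_v_ang v Hc b (a - v (ang b)) ltac:(lra))
    as [d [Hd Hnear]].
  pose proof (Rabs_pos c) as Hc0.
  set (e := Rmin (e0 / 2) (d / (2 * (Rabs c + 1)))).
  assert (He : 0 < e) by (apply Rmin_glb_lt; [lra|apply Rdiv_lt_0_compat; lra]).
  assert (He1 : e <= e0 / 2) by apply Rmin_l.
  assert (He2 : e * (2 * (Rabs c + 1)) <= d).
  { pose proof (Rmin_r (e0 / 2) (d / (2 * (Rabs c + 1)))) as Hr; fold e in Hr.
    apply Rmult_le_compat_r with (r := 2 * (Rabs c + 1)) in Hr; [|lra].
    unfold Rdiv in Hr. rewrite Rmult_assoc, Rinv_l in Hr by lra. lra. }
  specialize (Hbound e ltac:(lra)).
  assert (Hclose : Rabs (b + c * e - b) < d).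
  { replace (b + c * e - b) with (c * e) by ring.
    rewrite Rabs_mult, (Rabs_right e) by lra. nra. }
  specialize (Hnear _ Hclose). apply Rabs_def2 in Hnear. lra.
Qed.

Section MaxArc.

Variables (v : pt -> R) (alpha0 theta1 : R).
Hypothesis v_separable : separable_S1 v.
Hypothesis theta1_range : 0 <= theta1 < PI.
Hypothesis max_arc : forall p, is_max_point v p <->
  exists theta, Rabs theta <= theta1 /\ p = ang (alpha0 + theta).

(* When the centre ang alpha0 = ang (alpha + th) lies in S^1_alpha, the arc
   of maximum points contains some ang (alpha + t) of S^1_alpha whose mirror
   image ang (alpha - t) is not a maximum point: take t = th + theta1 if that
   is < PI, and otherwise a t just short of PI, away from the arc's far end. *)
Lemma max_point_with_nonmax_mirror alpha th :
  0 < th < PI -> ang alpha0 = ang (alpha + th) ->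
  exists t, 0 < t < PI /\ is_max_point v (ang (alpha + t)) /\
            ~ is_max_point v (ang (alpha - t)).
Proof.
  intros Hth E.
  assert (Hwitness : forall t, 0 < t < PI -> - theta1 <= t - th <= theta1 ->
            0 < t + th - theta1 -> t + th + theta1 < 2 * PI ->
            exists t, 0 < t < PI /\ is_max_point v (ang (alpha + t)) /\
                      ~ is_max_point v (ang (alpha - t))).
  { intros t Ht Hin Hgap1 Hgap2. exists t; split; [exact Ht|split].
    - apply max_arc. exists (t - th); split; [apply Rabs_le; lra|].
      rewrite (ang_shift _ _ (t - th) E). f_equal; ring.
    - intros Hmax. apply max_arc in Hmax. destruct Hmax as [s [Hs Hp]].
      pose proof (Rle_abs s). pose proof (Rle_abs (- s)). rewrite Rabs_Ropp in *.
      rewrite (ang_shift _ _ s E) in Hp.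
      apply (ang_neq (alpha - t) (t + th + s)); [lra|].
      rewrite Hp. f_equal; ring. }
  destruct (Rlt_le_dec (th + theta1) PI).
  - apply (Hwitness (th + theta1)); lra.
  - apply (Hwitness ((Rabs (th - theta1) + (2 * PI - th - theta1)) / 2));
      unfold Rabs; destruct (Rcase_abs (th - theta1)); lra.
Qed.

Lemma centre_in_half alpha th :
  0 < th < PI -> ang alpha0 = ang (alpha + th) ->
  forall x, S1_half alpha x -> v (refl alpha x) <= v x.
Proof.
  intros Hth E.
  destruct (max_point_with_nonmax_mirror alpha th Hth E)
    as [t [Ht [[_ Hmax] Hmirror]]].
  apply (separable_strict_drop v alpha (ang (alpha + t)) v_separable).
  - exists t; split; [exact Ht|reflexivity].
  - rewrite refl_ang.
    destruct (Rlt_le_dec (v (ang (alpha - t))) (v (ang (alpha + t))))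
      as [Hlt|Hge]; [exact Hlt|].
    exfalso; apply Hmirror; split; [apply S1_ang|].
    intros q Hq. specialize (Hmax q Hq). lra.
Qed.

Lemma centre_in_opposite_half alpha th :
  PI < th < 2 * PI -> ang alpha0 = ang (alpha + th) ->
  forall t, 0 < t < PI -> v (ang (alpha + t)) <= v (ang (alpha - t)).
Proof.
  intros Hth E t Ht.
  assert (E' : ang alpha0 = ang ((alpha + PI) + (th - PI)))
    by (rewrite E; f_equal; ring).
  assert (Hhalf : S1_half (alpha + PI) (ang ((alpha + PI) + (PI - t))))
    by (exists (PI - t); split; [lra|reflexivity]).
  pose proof (centre_in_half (alpha + PI) (th - PI) ltac:(lra) E' _ Hhalf) as Hle.
  rewrite refl_ang in Hle.
  replace (alpha + PI - (PI - t)) with (alpha + t) in Hle by ring.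
  replace (alpha + PI + (PI - t)) with ((alpha - t) + 2 * PI) in Hle by ring.
  rewrite ang_2PI in Hle. exact Hle.
Qed.

Hypothesis v_continuous : continuous_on_S1 v.

(* Case 3: the centre lies on the axis of reflection.  Rotating alpha by a
   small e towards the side away from the centre reduces to case 2, and the
   inequality survives as e -> 0 by continuity. *)
Lemma centre_on_axis alpha :
  ang alpha0 = ang alpha \/ ang alpha0 = ang (alpha + PI) ->
  forall t, 0 < t < PI -> v (ang (alpha + t)) <= v (ang (alpha - t)).
Proof.
  intros Haxis t Ht.
  assert (Hm : 0 < Rmin t (PI - t)) by (apply Rmin_glb_lt; lra).
  pose proof (Rmin_l t (PI - t)). pose proof (Rmin_r t (PI - t)).
  destruct Haxis as [E|E].
  - apply (ge_at_limit v _ (alpha - t) 2 _ v_continuous Hm).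
    intros e He.
    assert (E' : ang alpha0 = ang ((alpha + e) + (2 * PI - e))).
    { rewrite E, <- (ang_2PI alpha). f_equal; ring. }
    pose proof (centre_in_opposite_half (alpha + e) (2 * PI - e) ltac:(lra) E'
                  (t - e) ltac:(lra)) as Hle.
    replace (alpha + e + (t - e)) with (alpha + t) in Hle by ring.
    replace (alpha + e - (t - e)) with (alpha - t + 2 * e) in Hle by ring.
    exact Hle.
  - apply (ge_at_limit v _ (alpha - t) (-2) _ v_continuous Hm).
    intros e He.
    assert (E' : ang alpha0 = ang ((alpha - e) + (PI + e)))
      by (rewrite E; f_equal; ring).
    pose proof (centre_in_opposite_half (alpha - e) (PI + e) ltac:(lra) E'
                  (t + e) ltac:(lra)) as Hle.
    replace (alpha - e + (t + e)) with (alpha + t) in Hle by ring.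
    replace (alpha - e - (t + e)) with (alpha - t + -2 * e) in Hle by ring.
    exact Hle.
Qed.

End MaxArc.

Theorem corollary2p1 (v : pt -> R) (alpha0 theta1 : R) :
  continuous_on_S1 v ->
  (forall p, S1 p -> 0 < v p) ->
  separable_S1 v ->
  (* max_{S^1} v > min_{S^1} v *)
  (exists p q, S1 p /\ S1 q /\ v p < v q) ->
  0 <= alpha0 < 2 * PI ->
  0 <= theta1 < PI ->
  (forall p, is_max_point v p <->
     exists theta, Rabs theta <= theta1 /\ p = ang (alpha0 + theta)) ->
  forall alpha : R,
    (S1_half alpha (ang alpha0) ->
       forall x, S1_half alpha x -> v x >= v (refl alpha x)) /\
    (S1 (ang alpha0) /\ ~ S1_half alpha (ang alpha0) ->
       forall x, S1_half alpha x -> v x <= v (refl alpha x)).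
Proof.
  intros Hcont _ Hsep _ _ Htheta1 Hmax alpha. split.
  - intros [th [Hth E]] x Hx.
    pose proof (centre_in_half v alpha0 theta1 Hsep Htheta1 Hmax alpha th Hth E x Hx).
    lra.
  - intros [_ Hnot] x [t [Ht ->]]. rewrite refl_ang.
    destruct (ang_reduce (alpha0 - alpha)) as [th [Hth E0]].
    assert (E : ang alpha0 = ang (alpha + th)).
    { pose proof (ang_shift _ _ alpha E0) as E1.
      replace (alpha0 - alpha + alpha) with alpha0 in E1 by ring.
      rewrite <- E1. f_equal; ring. }
    destruct (Rle_lt_or_eq_dec 0 th (proj1 Hth)) as [Hpos|Hzero].
    + destruct (Rtotal_order th PI) as [Hlt|[Heq|Hgt]].
      * exfalso; apply Hnot. exists th; split; [lra|exact E].
      * subst th. apply (centre_on_axis v alpha0 theta1); auto.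
      * apply (centre_in_opposite_half v alpha0 theta1 Hsep Htheta1 Hmax alpha th);
          [lra|exact E|exact Ht].
    + subst th. rewrite Rplus_0_r in E.
      apply (centre_on_axis v alpha0 theta1); auto.
Qed.
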